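(* Let $\mathcal{A}$ be a $\tau^*_{\mathrm{tup}}$-structure which is a model of $T_{\mathrm{tup}}$ and whose $M$-sort (as a $\tau$-structure) is $\mathcal{M}$. Then there is a unique embedding $e$ of the $\tau_{\mathrm{tup}}$-structure $\mathcal{M}^{<\mathbb{N}}$ into (the $\tau_{\mathrm{tup}}$-reduct of) $\mathcal{A}$ which is the identity on the sort $M$; moreover $e$ is an embedding of $(\mathcal{M}^{<\mathbb{N}},R',g')$ into $\mathcal{A}$, where $R'=\{n\in\mathbb{N}: e(n)\in R^{\mathcal{A}}\}$ and $g'(n,\pi)=g^{\mathcal{A}}(e(n),e(\pi))$. Furthermore, identifying $\mathcal{M}^{<\mathbb{N}}$ with its image under $e$: the $N$-sort of $\mathcal{A}$ is an end extension of $\mathbb{N}$, and every element $\pi$ of the $M_{\mathrm{tup}}$-sort of $\mathcal{A}$ with $|\pi|\in\mathbb{N}$ belongs to $M^{<\mathbb{N}}$.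
   Context: Fix a countable language $\tau$. $\tau_{\mathrm{tup}}$ is the three-sorted language with sorts $M$ (carrying the symbols of $\tau$), $N$ (carrying the language of arithmetic $0,1,+,\cdot,<$), and $M_{\mathrm{tup}}$, together with a function $|\cdot|:M_{\mathrm{tup}}\to N$ and a relation $\mathrm{ind}\subseteq M_{\mathrm{tup}}\times N\times M$ (''the $i$-th entry of $\pi$ is $m$''). $\tau^*_{\mathrm{tup}}=\tau_{\mathrm{tup}}\cup\{R,g\}$ with $R$ a unary relation on $N$ and $g:N\times M_{\mathrm{tup}}\to M$ a binary function. $T_{\mathrm{tup}}$ is the theory stating: the $N$-sort satisfies $PA^-$ (Peano arithmetic without induction, i.e. the finitely axiomatized theory of non-negative parts of discretely ordered rings); (a) $\mathrm{ind}(\pi,i,m)\to i<|\pi|$; (b) $\mathrm{ind}(\pi,i,m)\wedge\mathrm{ind}(\pi,i,m')\to m=m'$; (c) $i<|\pi|\to\exists m\,\mathrm{ind}(\pi,i,m)$; (d) if $|\pi|=|\rho|$ and for all $i<|\pi|$ there is $m$ with $\mathrm{ind}(\pi,i,m)\wedge\mathrm{ind}(\rho,i,m)$, then $\pi=\rho$; (e) some $\pi$ has $|\pi|=0$; (f) for all $\pi,m$ there is $\rho$ with $|\rho|=|\pi|+1$, $\mathrm{ind}(\rho,|\pi|,m)$ and $\mathrm{ind}(\pi,i,m')\leftrightarrow\mathrm{ind}(\rho,i,m')$ for all $i<|\pi|$, $m'$; (g) for all $\pi$ with $|\pi|\ge1$ there is $\rho$ with $|\rho|=|\pi|-1$ and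 $\mathrm{ind}(\pi,i,m)\leftrightarrow\mathrm{ind}(\rho,i,m)$ for all $i<|\rho|$, $m$. For a $\tau$-structure $\mathcal{M}$ with domain $M$, $\mathcal{M}^{<\mathbb{N}}=(\mathcal{M},\mathbb{N},M^{<\mathbb{N}})$ is the $\tau_{\mathrm{tup}}$-structure with the standard natural numbers and all finite tuples from $M$, with the natural length and indexing. *)

From Stdlib Require Import List Arith Fin.
Import ListNotations.
Set Implicit Arguments.

Record language := {
  funsym : Type;
  fun_ar : funsym -> nat;
  relsym : Type;
  rel_ar : relsym -> nat;
}.

Definition countable_language (L : language) : Prop :=
  (exists c : funsym L -> nat, forall f g, c f = c g -> f = g) /\
  (exists c : relsym L -> nat, forall r s, c r = c s -> r = s).

Record Lstruct (L : language) := {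
  carrier :> Type;
  fun_int : forall f : funsym L, (Fin.t (@fun_ar L f) -> carrier) -> carrier;
  rel_int : forall r : relsym L, (Fin.t (@rel_ar L r) -> carrier) -> Prop;
}.

Record tupStruct (L : language) (Mst : Lstruct L) := {
  Nsort : Type;
  zeroN : Nsort; oneN : Nsort;
  addN : Nsort -> Nsort -> Nsort;
  mulN : Nsort -> Nsort -> Nsort;
  ltN : Nsort -> Nsort -> Prop;
  Tsort : Type;
  len : Tsort -> Nsort;
  ind : Tsort -> Nsort -> carrier Mst -> Prop;
}.

Record tupStarStruct (L : language) (Mst : Lstruct L) := {
  base :> tupStruct Mst;
  Rrel : Nsort base -> Prop;
  gfun : Nsort base -> Tsort base -> carrier Mst;
}.

Section Theory.
Variables (L : language) (Mst : Lstruct L) (A : tupStruct Mst).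
Local Notation N := (Nsort A).
Local Notation "x + y" := (addN A x y).
Local Notation "x * y" := (mulN A x y).
Local Notation "x < y" := (ltN A x y).
Local Notation "0" := (zeroN A).
Local Notation "1" := (oneN A).

(** PA^- (Kaye, Models of Peano Arithmetic, ch. 2). *)
Definition PAminus : Prop :=
  (forall x y z : N, (x + y) + z = x + (y + z)) /\
  (forall x y : N, x + y = y + x) /\
  (forall x y z : N, (x * y) * z = x * (y * z)) /\
  (forall x y : N, x * y = y * x) /\
  (forall x y z : N, x * (y + z) = x * y + x * z) /\
  (forall x : N, x + 0 = x /\ x * 0 = 0) /\
  (forall x : N, x * 1 = x) /\
  (forall x y z : N, x < y -> y < z -> x < z) /\
  (forall x : N, ~ x < x) /\
  (forall x y : N, x < y \/ x = y \/ y < x) /\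
  (forall x y z : N, x < y -> x + z < y + z) /\
  (forall x y z : N, 0 < z -> x < y -> x * z < y * z) /\
  (forall x y : N, x < y -> exists z, x + z = y) /\
  (0 < 1 /\ forall x : N, 0 < x -> (1 < x \/ 1 = x)) /\
  (forall x : N, 0 < x \/ 0 = x).

Definition T_tup : Prop :=
  PAminus /\
  (forall p i m, ind A p i m -> i < len A p) /\
  (forall p i m m', ind A p i m -> ind A p i m' -> m = m') /\
  (forall p i, i < len A p -> exists m, ind A p i m) /\
  (forall p r, len A p = len A r ->
               (forall i, i < len A p -> exists m, ind A p i m /\ ind A r i m) ->
               p = r) /\
  (exists p, len A p = 0) /\
  (forall p m, exists r, len A r = len A p + 1 /\ ind A r (len A p) m /\
               forall i m', i < len A p -> (ind A p i m' <-> ind A r i m')) /\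
  (forall p, (1 < len A p \/ 1 = len A p) ->
               exists r, len A r + 1 = len A p /\
               forall i m, i < len A r -> (ind A p i m <-> ind A r i m)).
End Theory.

Definition stdTup (L : language) (Mst : Lstruct L) : tupStruct Mst := {|
  Nsort := nat; zeroN := 0; oneN := 1; addN := Nat.add; mulN := Nat.mul;
  ltN := Nat.lt;
  Tsort := list (carrier Mst);
  len := @length (carrier Mst);
  ind := fun p i m => nth_error p i = Some m;
|}.

(** An embedding of tau_tup-structures B -> A over the same M-sort which is
    the identity on M (so the tau-symbols are trivially preserved):
    injective maps on the N- and M_tup-sorts preserving 0,1,+,* and
    |.|, and preserving and reflecting < and ind. *)
Definition tup_embedding (L : language) (Mst : Lstruct L) (B A : tupStruct Mst)
  (eN : Nsort B -> Nsort A) (eT : Tsort B -> Tsort A) : Prop :=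
  (forall x y, eN x = eN y -> x = y) /\
  (forall p q, eT p = eT q -> p = q) /\
  eN (zeroN B) = zeroN A /\ eN (oneN B) = oneN A /\
  (forall x y, eN (addN B x y) = addN A (eN x) (eN y)) /\
  (forall x y, eN (mulN B x y) = mulN A (eN x) (eN y)) /\
  (forall x y, ltN B x y <-> ltN A (eN x) (eN y)) /\
  (forall p, eN (len B p) = len A (eT p)) /\
  (forall p i m, ind B p i m <-> ind A (eT p) (eN i) m).

Definition tupstar_embedding (L : language) (Mst : Lstruct L)
  (B A : tupStarStruct Mst)
  (eN : Nsort B -> Nsort A) (eT : Tsort B -> Tsort A) : Prop :=
  @tup_embedding L Mst B A eN eT /\
  (forall x, Rrel B x <-> Rrel A (eN x)) /\
  (forall x p, gfun B x p = gfun A (eN x) (eT p)).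

Definition stdTupStar (L : language) (Mst : Lstruct L) (A : tupStarStruct Mst)
  (eN : nat -> Nsort A) (eT : list (carrier Mst) -> Tsort A)
  : tupStarStruct Mst := {|
  base := stdTup Mst;
  Rrel := fun n : nat => Rrel A (eN n);
  gfun := fun (n : nat) (p : list (carrier Mst)) => gfun A (eN n) (eT p);
|}.

(* The standard part of A is generated by its numerals 0, 0+1, 0+1+1, ...,
   and the axioms of PA^- make these form an initial segment of the N-sort
   isomorphic to the standard naturals.  A finite list s of elements of M is
   then coded by a tuple of length numN (length s) whose entries at the
   numerals are those of s: codes exist by appending entries one at a time
   (axioms (e), (f)), are unique by extensionality (d) since every index
   below a numeral is itself a numeral, and every tuple of numeral length
   decodes to a list by reading off its entries (c).  An embedding must send
   numerals to numerals and each list to its code, which gives uniqueness. *)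
From Stdlib Require Import List Arith Lia ClassicalEpsilon.
Import ListNotations.
Set Implicit Arguments.
Unset Strict Implicit.

Section Numerals.
Variables (L : language) (Mst : Lstruct L) (A : tupStruct Mst).
Hypothesis PA : PAminus A.

Local Notation "x +' y" := (addN A x y) (at level 50, left associativity).
Local Notation "x *' y" := (mulN A x y) (at level 40, left associativity).
Local Notation "x <' y" := (ltN A x y) (at level 70).

Lemma addN_assoc x y z : x +' y +' z = x +' (y +' z).
Proof. pose proof PA as (H & _); exact (H x y z). Qed.

Lemma addN_comm x y : x +' y = y +' x.
Proof. pose proof PA as (_ & H & _); exact (H x y). Qed.

Lemma mulN_comm x y : x *' y = y *' x.
Proof. pose proof PA as (_ & _ & _ & H & _); exact (H x y). Qed.

Lemma mulN_add_distr_l x y z : x *' (y +' z) = x *' y +' x *' z.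
Proof. pose proof PA as (_ & _ & _ & _ & H & _); exact (H x y z). Qed.

Lemma addN_0_r x : x +' zeroN A = x.
Proof. pose proof PA as (_ & _ & _ & _ & _ & H & _); apply H. Qed.

Lemma mulN_0_r x : x *' zeroN A = zeroN A.
Proof. pose proof PA as (_ & _ & _ & _ & _ & H & _); apply H. Qed.

Lemma mulN_1_r x : x *' oneN A = x.
Proof. pose proof PA as (_ & _ & _ & _ & _ & _ & H & _); exact (H x). Qed.

Lemma ltN_trans x y z : x <' y -> y <' z -> x <' z.
Proof. pose proof PA as (_ & _ & _ & _ & _ & _ & _ & H & _); exact (H x y z). Qed.

Lemma ltN_irrefl x : ~ x <' x.
Proof. pose proof PA as (_ & _ & _ & _ & _ & _ & _ & _ & H & _); exact (H x). Qed.

Lemma ltN_trichotomy x y : x <' y \/ x = y \/ y <' x.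
Proof. pose proof PA as (_ & _ & _ & _ & _ & _ & _ & _ & _ & H & _); exact (H x y). Qed.

Lemma ltN_add_r x y z : x <' y -> x +' z <' y +' z.
Proof. pose proof PA as (_ & _ & _ & _ & _ & _ & _ & _ & _ & _ & H & _); exact (H x y z). Qed.

Lemma ltN_exists_add x y : x <' y -> exists z, x +' z = y.
Proof.
  pose proof PA as (_ & _ & _ & _ & _ & _ & _ & _ & _ & _ & _ & _ & H & _); exact (H x y).
Qed.

Lemma ltN_0_1 : zeroN A <' oneN A.
Proof.
  pose proof PA as (_ & _ & _ & _ & _ & _ & _ & _ & _ & _ & _ & _ & _ & [H _] & _); exact H.
Qed.

Lemma ltN_0_le_1 x : zeroN A <' x -> oneN A <' x \/ oneN A = x.
Proof.
  pose proof PA as (_ & _ & _ & _ & _ & _ & _ & _ & _ & _ & _ & _ & _ & [_ H] & _); exact (H x).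
Qed.

Lemma ltN_0_or_eq x : zeroN A <' x \/ zeroN A = x.
Proof.
  pose proof PA as (_ & _ & _ & _ & _ & _ & _ & _ & _ & _ & _ & _ & _ & _ & H); exact (H x).
Qed.

Lemma ltN_asymm x y : x <' y -> ~ y <' x.
Proof. intros Hxy Hyx; exact (ltN_irrefl (ltN_trans Hxy Hyx)). Qed.

Lemma nltN_0_r x : ~ x <' zeroN A.
Proof.
  intro Hx; destruct (ltN_0_or_eq x) as [H0x | <-].
  - exact (ltN_asymm Hx H0x).
  - exact (ltN_irrefl Hx).
Qed.

Lemma ltN_add_l x y z : x <' y -> z +' x <' z +' y.
Proof. rewrite !(addN_comm z); apply ltN_add_r. Qed.

Lemma ltN_succ_diag_r x : x <' x +' oneN A.
Proof. rewrite <- (addN_0_r x) at 1; apply ltN_add_l, ltN_0_1. Qed.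

Lemma ltN_le_succ x a : x <' a -> x +' oneN A = a \/ x +' oneN A <' a.
Proof.
  intro Hxa; destruct (ltN_exists_add Hxa) as [z <-].
  destruct (ltN_0_or_eq z) as [Hz | <-].
  - destruct (ltN_0_le_1 Hz) as [H1z | <-]; [right; now apply ltN_add_l | now left].
  - rewrite addN_0_r in Hxa; destruct (ltN_irrefl Hxa).
Qed.

Fixpoint numN (n : nat) : Nsort A :=
  match n with 0 => zeroN A | S k => numN k +' oneN A end.

Lemma numN_1 : numN 1 = oneN A.
Proof. simpl; rewrite addN_comm; apply addN_0_r. Qed.

Lemma numN_add m n : numN (m + n) = numN m +' numN n.
Proof.
  induction m as [|m IH]; simpl.
  - rewrite addN_comm; symmetry; apply addN_0_r.
  - rewrite IH, !addN_assoc, (addN_comm (numN n)); reflexivity.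
Qed.

Lemma numN_mul m n : numN (m * n) = numN m *' numN n.
Proof.
  induction m as [|m IH]; simpl.
  - rewrite mulN_comm; symmetry; apply mulN_0_r.
  - rewrite numN_add, IH, (mulN_comm (_ +' _)), mulN_add_distr_l, mulN_1_r,
      (mulN_comm (numN n)), addN_comm; reflexivity.
Qed.

Lemma numN_lt_mono m n : m < n -> numN m <' numN n.
Proof.
  induction 1 as [|n _ IH]; simpl.
  - apply ltN_succ_diag_r.
  - exact (ltN_trans IH (ltN_succ_diag_r _)).
Qed.

Lemma numN_lt_iff m n : numN m <' numN n <-> m < n.
Proof.
  split; [|apply numN_lt_mono].
  intro Hmn; destruct (Nat.lt_ge_cases m n) as [|Hnm]; [assumption|].
  destruct (Nat.eq_dec m n) as [-> | Hne].
  - destruct (ltN_irrefl Hmn).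
  - assert (Hlt : n < m) by lia; destruct (ltN_asymm Hmn (numN_lt_mono Hlt)).
Qed.

Lemma numN_inj m n : numN m = numN n -> m = n.
Proof.
  intro Hmn; destruct (Nat.lt_trichotomy m n) as [H | [H | H]]; [| exact H |];
    apply numN_lt_mono in H; rewrite Hmn in H; destruct (ltN_irrefl H).
Qed.

Lemma numN_initial_segment a n : a <' numN n -> exists m, a = numN m.
Proof.
  revert a; induction n as [|n IH]; simpl; intros a Ha.
  - destruct (nltN_0_r Ha).
  - destruct (ltN_trichotomy a (numN n)) as [H | [-> | H]]; [now apply IH | now exists n |].
    destruct (ltN_le_succ H) as [<- | H'].
    + destruct (ltN_irrefl Ha).
    + destruct (ltN_asymm Ha H').
Qed.

Lemma numN_unique (f : nat -> Nsort A) :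
  f 0 = zeroN A -> f 1 = oneN A -> (forall m n, f (m + n) = f m +' f n) ->
  forall n, f n = numN n.
Proof.
  intros f0 f1 fadd; induction n as [|n IH]; [exact f0|].
  simpl; rewrite <- IH, <- f1, <- fadd, Nat.add_1_r; reflexivity.
Qed.

End Numerals.

Lemma tup_embedding_star (L : language) (Mst : Lstruct L) (A : tupStarStruct Mst)
  (eN : nat -> Nsort A) (eT : list (carrier Mst) -> Tsort A) :
  tup_embedding (stdTup Mst) A eN eT -> tupstar_embedding (stdTupStar A eN eT) A eN eT.
Proof. intro He; split; [exact He | split; reflexivity]. Qed.

Section Codes.
Variables (L : language) (Mst : Lstruct L) (A : tupStruct Mst).
Hypothesis HA : T_tup A.

Let PA : PAminus A := proj1 HA.
Local Notation num := (numN A).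

Lemma ind_lt_len t i m : ind A t i m -> ltN A i (len A t).
Proof. pose proof HA as (_ & H & _); exact (H t i m). Qed.

Lemma ind_functional t i m m' : ind A t i m -> ind A t i m' -> m = m'.
Proof. pose proof HA as (_ & _ & H & _); exact (H t i m m'). Qed.

Lemma ind_total t i : ltN A i (len A t) -> exists m, ind A t i m.
Proof. pose proof HA as (_ & _ & _ & H & _); exact (H t i). Qed.

Lemma tuple_ext t r : len A t = len A r ->
  (forall i, ltN A i (len A t) -> exists m, ind A t i m /\ ind A r i m) -> t = r.
Proof. pose proof HA as (_ & _ & _ & _ & H & _); exact (H t r). Qed.

Lemma empty_tuple : exists t, len A t = zeroN A.
Proof. pose proof HA as (_ & _ & _ & _ & _ & H & _); exact H. Qed.

Lemma snoc_tuple t m : exists r, len A r = addN A (len A t) (oneN A) /\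
  ind A r (len A t) m /\ forall i m', ltN A i (len A t) -> (ind A t i m' <-> ind A r i m').
Proof. pose proof HA as (_ & _ & _ & _ & _ & _ & H & _); exact (H t m). Qed.

Lemma ind_num_lt_len t n k m : len A t = num n -> ind A t (num k) m -> k < n.
Proof.
  intros Ht Hk; apply ind_lt_len in Hk; rewrite Ht in Hk.
  exact (proj1 (numN_lt_iff PA _ _) Hk).
Qed.

Definition codes (s : list (carrier Mst)) (t : Tsort A) : Prop :=
  len A t = num (length s) /\
  forall k m, ind A t (num k) m <-> nth_error s k = Some m.

Lemma codes_of_prefix s t : len A t = num (length s) ->
  (forall k m, k < length s -> (ind A t (num k) m <-> nth_error s k = Some m)) ->
  codes s t.
Proof.
  intros Ht Hs; split; [exact Ht|]; intros k m.
  destruct (Nat.lt_ge_cases k (length s)) as [Hk | Hk]; [now apply Hs|].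
  split; intro H.
  - pose proof (ind_num_lt_len Ht H); lia.
  - apply nth_error_None in Hk; congruence.
Qed.

Lemma codes_snoc s t x r : codes s t ->
  len A r = addN A (len A t) (oneN A) -> ind A r (len A t) x ->
  (forall i m, ltN A i (len A t) -> (ind A t i m <-> ind A r i m)) ->
  codes (s ++ [x]) r.
Proof.
  intros [Ht Hts] Hr Hrx Hrt.
  assert (Hlen : len A r = num (length (s ++ [x])))
    by (rewrite Hr, Ht, length_app, Nat.add_comm; reflexivity).
  apply codes_of_prefix; [exact Hlen|]; intros k m Hk.
  rewrite length_app in Hk; simpl in Hk.
  destruct (Nat.eq_dec k (length s)) as [-> | Hne].
  - rewrite nth_error_app2, Nat.sub_diag by lia; simpl; rewrite Ht in Hrx.
    split; intro H.
    + f_equal; exact (ind_functional Hrx H).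
    + injection H as <-; exact Hrx.
  - rewrite nth_error_app1, <- Hts by lia; symmetry; apply Hrt.
    rewrite Ht; apply (numN_lt_mono PA); lia.
Qed.

Lemma codes_exist s : exists t, codes s t.
Proof.
  induction s as [|x s [t Ht]] using rev_ind.
  - destruct empty_tuple as [t Ht]; exists t.
    apply codes_of_prefix; [exact Ht | simpl; lia].
  - destruct (snoc_tuple t x) as (r & Hr & Hrx & Hrt).
    exists r; exact (codes_snoc Ht Hr Hrx Hrt).
Qed.

Lemma codes_unique s t r : codes s t -> codes s r -> t = r.
Proof.
  intros [Ht Hts] [Hr Hrs]; apply tuple_ext; [congruence|]; intros i Hi.
  rewrite Ht in Hi; destruct (numN_initial_segment PA Hi) as [k ->].
  apply (numN_lt_iff PA) in Hi; apply nth_error_Some in Hi.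
  destruct (nth_error s k) as [m|] eqn:Hk; [|contradiction].
  exists m; rewrite Hts, Hrs; auto.
Qed.

Lemma codes_inj s s' t : codes s t -> codes s' t -> s = s'.
Proof.
  intros [_ Hs] [_ Hs']; apply nth_error_ext; intro k.
  destruct (nth_error s k) as [m|] eqn:Hk.
  - symmetry; apply Hs', Hs, Hk.
  - destruct (nth_error s' k) as [m|] eqn:Hk'; [|reflexivity].
    apply Hs', Hs in Hk'; congruence.
Qed.

Lemma prefix_decoded t n j : len A t = num n -> j <= n ->
  exists s, length s = j /\
    forall k m, k < j -> (ind A t (num k) m <-> nth_error s k = Some m).
Proof.
  intros Ht; induction j as [|j IH]; intro Hj.
  - exists []; split; [reflexivity | intros; lia].
  - destruct IH as (s & Hs & Hts); [lia|].
    assert (Hjt : ltN A (num j) (len A t)) by (rewrite Ht; apply (numN_lt_mono PA); lia).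
    destruct (ind_total Hjt) as [x Hx].
    exists (s ++ [x]); split; [rewrite length_app, Hs; simpl; lia|].
    intros k m Hk; destruct (Nat.eq_dec k j) as [-> | Hne].
    + rewrite nth_error_app2, Hs, Nat.sub_diag by lia; simpl; split; intro H.
      * f_equal; exact (ind_functional Hx H).
      * injection H as <-; exact Hx.
    + rewrite nth_error_app1 by lia; apply Hts; lia.
Qed.

Lemma codes_of_num_len t n : len A t = num n -> exists s, codes s t.
Proof.
  intro Ht; destruct (prefix_decoded Ht (le_n n)) as (s & Hs & Hts).
  exists s; apply codes_of_prefix; rewrite Hs; assumption.
Qed.

Definition codeT (s : list (carrier Mst)) : Tsort A :=
  proj1_sig (constructive_indefinite_description _ (codes_exist s)).

Lemma codeT_codes s : codes s (codeT s).
Proof. exact (proj2_sig (constructive_indefinite_description _ (codes_exist s))). Qed.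

Lemma numN_codeT_embedding : tup_embedding (stdTup Mst) A num codeT.
Proof.
  unfold tup_embedding; simpl.
  split; [apply (numN_inj PA)|].
  split.
  { intros s s' Hss'; apply (codes_inj (codeT_codes s)); rewrite Hss'; apply codeT_codes. }
  split; [reflexivity|].
  split; [apply (numN_1 PA)|].
  split; [apply (numN_add PA)|].
  split; [apply (numN_mul PA)|].
  split; [intros m n; symmetry; apply (numN_lt_iff PA)|].
  split; [intro s; symmetry; apply codeT_codes|].
  intros s k m; symmetry; apply codeT_codes.
Qed.

Lemma tup_embedding_unique eN eT : tup_embedding (stdTup Mst) A eN eT ->
  (forall n, eN n = num n) /\ (forall s, eT s = codeT s).
Proof.
  intros (_ & _ & e0 & e1 & eadd & _ & _ & elen & eind).
  assert (eN_num : forall n, eN n = num n) by exact (numN_unique e0 e1 eadd).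
  split; [exact eN_num|]; intro s.
  apply (codes_unique (s := s)); [|apply codeT_codes]; split.
  - rewrite <- elen, eN_num; reflexivity.
  - intros k m; rewrite <- eN_num, <- eind; reflexivity.
Qed.

Lemma num_len_codeT t n : len A t = num n -> exists s, t = codeT s.
Proof.
  intro Ht; destruct (codes_of_num_len Ht) as [s Hs].
  exists s; exact (codes_unique Hs (codeT_codes s)).
Qed.

End Codes.

Theorem lemma5p5 (L : language) (HL : countable_language L) (Mst : Lstruct L)
  (A : tupStarStruct Mst) (HA : T_tup A) :
  exists (eN : nat -> Nsort A) (eT : list (carrier Mst) -> Tsort A),
    (* e is an embedding of M^{<N} into the tau_tup-reduct of A, identity on M *)
    @tup_embedding L Mst (stdTup Mst) A eN eT /\
    (* uniqueness *)
    (forall (eN' : nat -> Nsort A) (eT' : list (carrier Mst) -> Tsort A),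
        @tup_embedding L Mst (stdTup Mst) A eN' eT' ->
        (forall n, eN' n = eN n) /\ (forall p, eT' p = eT p)) /\
    (* e is an embedding of (M^{<N}, R', g') into A *)
    @tupstar_embedding L Mst (stdTupStar A eN eT) A eN eT /\
    (* the N-sort of A is an end extension of N *)
    (forall (a : Nsort A) (n : nat), ltN A a (eN n) -> exists m, a = eN m) /\
    (* tuples of standard length are standard *)
    (forall p : Tsort A, (exists n, len A p = eN n) -> exists s, p = eT s).
Proof.
  pose proof (numN_codeT_embedding HA) as Hemb.
  exists (numN A), (codeT HA).
  split; [exact Hemb|].
  split; [exact (tup_embedding_unique HA)|].
  split; [exact (tup_embedding_star Hemb)|].
  split; [exact (numN_initial_segment (proj1 HA))|].
  intros p [n Hn]; exact (num_len_codeT HA Hn).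
Qed.
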